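(* Let $f\in K$ have degree $n$. Then $f$ is quasi-symmetric if and only if $A_{\mathbf a^{(k)}}f=f$ for all $1\le k\le n$.
   Context: $K$ is the ring of integer formal power series of bounded degree in $x_1,x_2,\dots$. $f$ is quasi-symmetric if the coefficient of $x_{i_1}^{a_1}\cdots x_{i_k}^{a_k}$ equals that of $x_{j_1}^{a_1}\cdots x_{j_k}^{a_k}$ whenever $i_1<\dots<i_k$ and $j_1<\dots<j_k$. For a strictly increasing sequence $\mathbf a=(1\le a_1<a_2<\cdots)$ of positive integers, $A_{\mathbf a}:K\to K$ is the algebra homomorphism $A_{\mathbf a}f=f(0,\dots,0,x_1,0,\dots,0,x_2,0,\dots)$ with $x_i$ placed in position $a_i$ (i.e. substitute $x_{a_i}\mapsto x_i$ and all other variables $\mapsto0$). For an integer $k\ge1$, $\mathbf a^{(k)}$ is the sequence with $a^{(k)}(i)=i$ for $i<k$ and $a^{(k)}(i)=i+1$ for $i\ge k$. *)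

From mathcomp Require Import all_boot all_order all_algebra.
Set Implicit Arguments. Unset Strict Implicit. Unset Printing Implicit Defensive.
Import GRing.Theory Num.Theory.

(* Variables are x_1, x_2, ... (1-based).  An exponent vector is a function
   e : nat -> nat; e i is the exponent of x_i.  A genuine monomial has
   e 0 = 0 (there is no x_0) and finite support. *)
Definition expo := nat -> nat.

Definition is_monomial (e : expo) : Prop :=
  e 0%N = 0%N /\ exists N : nat, forall i, (N < i)%N -> e i = 0%N.

Definition mdeg_le (e : expo) (d : nat) : Prop :=
  forall N : nat, (\sum_(i < N) e i <= d)%N.

Definition mdeg_eq (e : expo) (d : nat) : Prop :=
  mdeg_le e d /\ exists N : nat, (\sum_(i < N) e i)%N = d.

Definition series := expo -> int.

Definition in_K (f : series) : Prop :=
  (forall e, ~ is_monomial e -> f e = 0%R) /\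
  exists d : nat, forall e, f e <> 0%R -> mdeg_le e d.

Definition has_degree (f : series) (n : nat) : Prop :=
  (forall e, f e <> 0%R -> mdeg_le e n) /\
  ((exists e, f e <> 0%R) -> exists e, f e <> 0%R /\ mdeg_eq e n).

Definition incr_upto (k : nat) (i : nat -> nat) : Prop :=
  (0 < k -> 1 <= i 1%N)%N /\ forall l, (1 <= l)%N -> (l < k)%N -> (i l < i l.+1)%N.

(* exponent vector of x_{i_1}^{c_1} ... x_{i_k}^{c_k} *)
Definition mono_of (k : nat) (i c : nat -> nat) : expo :=
  fun p => (\sum_(1 <= l < k.+1 | i l == p) c l)%N.

Definition quasi_symmetric (f : series) : Prop :=
  forall (k : nat) (c i j : nat -> nat),
    incr_upto k i -> incr_upto k j -> f (mono_of k i c) = f (mono_of k j c).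

Definition incr_seq (a : nat -> nat) : Prop :=
  (1 <= a 1%N)%N /\ forall l, (1 <= l)%N -> (a l < a l.+1)%N.

(* Preimage of an exponent vector m under x_{a_i} |-> x_i (other variables
   |-> 0): the coefficient of x^m in A_a f is the coefficient in f of x^e with
   e (a_i) = m i and e zero off the range of a.  (Position 0 is copied so that
   non-monomials are sent to non-monomials.) *)
Definition push (a : nat -> nat) (m : expo) : expo :=
  fun j => if j == 0%N then m 0%N
           else (\sum_(1 <= i < j.+1 | a i == j) m i)%N.

Definition A_op (a : nat -> nat) (f : series) : series :=
  fun m => f (push a m).

Definition a_k (k : nat) : nat -> nat :=
  fun i => if (i < k)%N then i else i.+1.

From mathcomp Require Import all_boot all_order all_algebra.
From mathcomp Require Import zify.
From Stdlib Require Import FunctionalExtensionality Classical.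
Set Implicit Arguments. Unset Strict Implicit.

(* The coefficient of x_{i_1}^{c_1} ... x_{i_k}^{c_k} in A_a f is the
   coefficient of x_{a(i_1)}^{c_1} ... x_{a(i_k)}^{c_k} in f, so a
   quasi-symmetric f is fixed by every A_a.  Conversely, zero exponents can be
   dropped, and then a monomial with a nonzero coefficient has k <= n.  If i is
   not the identity on 1..k and g is the first index it moves, then
   i = a^(g) o i' for an increasing i' with i'_k = i_k - 1 and g <= k <= n;
   induction on i_k reduces every index sequence to 1, ..., k. *)

Lemma incr_upto_gap K i a b : incr_upto K i -> 1 <= a -> a <= b -> b <= K ->
  i a + (b - a) <= i b.
Proof.
move=> [_ i_incr] a_pos; elim: b => [|b IHb] ab bK; first lia.
case: (ltngtP a b.+1) ab => // [ab _|<- _]; last by rewrite subnn addn0.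
have := i_incr b; have := IHb ab; lia.
Qed.

Lemma incr_upto_ge K i l : incr_upto K i -> 1 <= l <= K -> l <= i l.
Proof.
move=> iK /andP[l_pos lK]; have := incr_upto_gap iK (leqnn 1) l_pos lK.
have := proj1 iK; lia.
Qed.

Lemma incr_seq_incr_upto a K : incr_seq a -> incr_upto K a.
Proof.
by move=> [a1 a_incr]; split=> [_ | l l_pos _]; [exact: a1 | exact: a_incr].
Qed.

Lemma incr_upto_comp M K i a : incr_upto M i -> incr_upto K a -> a K <= M ->
  incr_upto K (i \o a).
Proof.
move=> iM aK aKM.
have a_range l : 1 <= l <= K -> 1 <= a l <= M.
  move=> /[dup] lK /andP[l_pos l_le].
  have := incr_upto_gap aK l_pos l_le (leqnn K); have := incr_upto_ge aK lK; lia.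
split=> [K_pos | l l_pos lK] /=.
  have a1 := a_range 1 K_pos; have := incr_upto_ge iM a1; have := proj1 iM; lia.
have al_lt := (proj2 aK) l l_pos lK.
have /andP[al_pos _] : 1 <= a l <= M by apply: a_range; lia.
have /andP[_ al1_le] : 1 <= a l.+1 <= M by apply: a_range; lia.
have := incr_upto_gap iM al_pos (ltnW al_lt) al1_le; lia.
Qed.

Lemma incr_seq_gap a r q : incr_seq a -> 1 <= r -> r <= q -> a r + (q - r) <= a q.
Proof.
by move=> aS r_pos rq; apply: incr_upto_gap (incr_seq_incr_upto q aS) r_pos rq _.
Qed.

Lemma incr_seq_eq a r q : incr_seq a -> 1 <= r -> 1 <= q -> (a r == a q) = (r == q).
Proof.
move=> aS r_pos q_pos; apply/eqP/eqP => [arq | -> //].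
case: (ltngtP r q) => // [rq | qr].
  by have := incr_seq_gap aS r_pos (ltnW rq); lia.
by have := incr_seq_gap aS q_pos (ltnW qr); lia.
Qed.

Lemma incr_seq_a_k k : 1 <= k -> incr_seq (a_k k).
Proof.
rewrite /a_k => k_pos; split=> [|l _]; first by case: ifP.
by case: (ltnP l k) => lk; case: (ltnP l.+1 k) => lk1; lia.
Qed.

Lemma incr_upto_fixed K i : incr_upto K i ->
  (forall l, 1 <= l <= K -> i l <= l) -> forall l, 1 <= l <= K -> i l = l.
Proof.
by move=> iK i_le l lK; apply/eqP; rewrite eqn_leq i_le // (incr_upto_ge iK lK).
Qed.

Lemma incr_upto_factor_a_k K i l0 : incr_upto K i -> 1 <= l0 <= K -> l0 < i l0 ->
  exists g i', [/\ 1 <= g <= K, incr_upto K i', i' K < i K &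
                   forall l, 1 <= l <= K -> i l = a_k g (i' l)].
Proof.
move=> iK l0K l0_moved.
have moved : exists l, (1 <= l <= K) && (l < i l) by exists l0; rewrite l0K.
case: (ex_minnP moved) => g /andP[gK g_moved] g_min.
have fixed_below l : 1 <= l < g -> i l = l.
  move=> lg; have lK : 1 <= l <= K by lia.
  apply/eqP; rewrite eqn_leq (incr_upto_ge iK lK) andbT leqNgt.
  by apply/negP => l_moved; have := g_min l; rewrite lK l_moved; lia.
have moved_above l : g <= l <= K -> g < i l.
  by move=> lK; have := @incr_upto_gap K i g l iK; lia.
pose i' l := if l < g then l else (i l).-1.
exists g, i'; split=> //.
- split=> [K_pos | l l_pos lK]; rewrite /i'.
    by case: (ltnP 1 g) => // g_le1; have := moved_above 1; lia.
  have := (proj2 iK) l l_pos lK.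
  have := moved_above l; have := moved_above l.+1.
  by case: (ltnP l g) => lg; case: (ltnP l.+1 g) => l1g; lia.
- rewrite /i'; have -> : (K < g) = false by lia.
  by have := @incr_upto_ge K i K iK; lia.
- move=> l lK; rewrite /i' /a_k; case: (ltnP l g) => lg.
    by rewrite lg fixed_below //; lia.
  by have := moved_above l; case: (ltnP (i l).-1 g); lia.
Qed.

Lemma eq_mono_of K i j c : (forall l, 1 <= l <= K -> i l = j l) ->
  mono_of K i c = mono_of K j c.
Proof.
move=> eq_ij; apply: functional_extensionality => p.
rewrite /mono_of big_mkcond [RHS]big_mkcond /=.
by apply: eq_big_nat => l lK; rewrite eq_ij //; lia.
Qed.

Lemma mono_of_id N m : m 0 = 0 -> (forall p, N < p -> m p = 0) ->
  mono_of N id m = m.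
Proof.
move=> m0 m_supp; apply: functional_extensionality => p.
rewrite /mono_of big_nat1_eq; case: ifP => // p_out.
case: (posnP p) => [->|p_pos]; first by rewrite m0.
by rewrite m_supp //; lia.
Qed.

Lemma sum_mono_of K i c N : incr_upto K i -> i K < N ->
  \sum_(p < N) mono_of K i c p = \sum_(1 <= l < K.+1) c l.
Proof.
move=> iK iKN; rewrite -(big_mkord xpredT) /mono_of.
under eq_bigr => p _ do rewrite big_mkcond.
rewrite exchange_big_nat; apply: eq_big_nat => l lK /=.
under eq_bigr => p _ do rewrite eq_sym.
rewrite -big_mkcond big_nat1_eq /=.
have := @incr_upto_gap K i l K iK; case: ifP => //; lia.
Qed.

Lemma sum_nat_a_k K l0 (F : nat -> nat) : 1 <= l0 <= K.+1 ->
  \sum_(1 <= l < K.+2) F l = F l0 + \sum_(1 <= l < K.+1) F (a_k l0 l).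
Proof.
elim: K => [|K IHK] l0K.
  have -> : l0 = 1 by lia.
  by rewrite big_nat1 big_geq ?addn0.
case: (ltnP l0 K.+2) => l0_le.
  rewrite big_nat_recr // [in RHS]big_nat_recr //= addnA IHK; last lia.
  by rewrite /a_k ltnNge -ltnS l0_le.
have -> : l0 = K.+2 by lia.
rewrite big_nat_recr // addnC; congr (_ + _); apply: eq_big_nat => l lK.
by rewrite /a_k; case: ifP; lia.
Qed.

Lemma mono_of_drop K l0 i c : 1 <= l0 <= K.+1 -> c l0 = 0 ->
  mono_of K.+1 i c = mono_of K (i \o a_k l0) (c \o a_k l0).
Proof.
move=> l0K c0; apply: functional_extensionality => p.
by rewrite /mono_of big_mkcond [RHS]big_mkcond /= (sum_nat_a_k _ l0K) c0 if_same.
Qed.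

Lemma drop_zero_exponents K c : exists K' a c',
  [/\ incr_upto K' a, a K' <= K, forall l, 1 <= l <= K' -> 0 < c' l &
      forall i, mono_of K i c = mono_of K' (i \o a) c'].
Proof.
elim: K c => [|K IHK] c; first by exists 0, id, c; split=> // l; lia.
case: (boolP (has (fun l => c l == 0) (iota 1 K.+1))); last first.
  move=> /hasPn c_pos; exists K.+1, id, c; split=> // l lK.
  by have := c_pos l; rewrite mem_iota; lia.
move=> /hasP[l0]; rewrite mem_iota => l0K /eqP c0.
have [K' [a [c' [aK' aK'K c'_pos mono_eq]]]] := IHK (c \o a_k l0).
exists K', (a_k l0 \o a), c'; split=> //.
- apply: incr_upto_comp aK' _ => //; apply: incr_seq_incr_upto; apply: incr_seq_a_k; lia.
- by rewrite /= /a_k; case: ifP; lia.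
- by move=> i; rewrite (mono_of_drop _ _ c0) ?mono_eq //; lia.
Qed.

Lemma push_at a m q : incr_seq a -> 1 <= q -> push a m (a q) = m q.
Proof.
move=> aS q_pos; have := incr_seq_gap aS (leqnn 1) q_pos; have := proj1 aS.
rewrite /push; case: eqP => [|_ aq_pos a_ge]; first lia.
rewrite big_nat_cond (eq_bigl (pred1 q)) ?big_nat1_eq; first by case: ifP; lia.
move=> r /=; case: (posnP r) => [->|r_pos]; first lia.
by rewrite incr_seq_eq //; case: eqP => [->|]; lia.
Qed.

Lemma push_mono_of a K i c : incr_seq a -> incr_upto K i ->
  push a (mono_of K i c) = mono_of K (a \o i) c.
Proof.
move=> aS iK; apply: functional_extensionality => p.
have i_pos l : 1 <= l <= K -> 1 <= i l by move=> lK; have := incr_upto_ge iK lK; lia.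
have a_ge q : 1 <= q -> q <= a q.
  by move=> q_pos; have := incr_seq_gap aS (leqnn 1) q_pos; have := proj1 aS; lia.
rewrite /push /mono_of big_mkcond [RHS]big_mkcond /=; case: eqP => [->|p_pos].
  rewrite big_mkcond /=; apply: eq_big_nat => l lK.
  by have := i_pos l lK; have := a_ge (i l); do 2 case: eqP; lia.
under eq_bigr => q _ do rewrite big_mkcond.
rewrite exchange_big_nat /=; apply: eq_big_nat => l lK.
rewrite big_mkcond (eq_bigr (fun q => if q == i l then
  (if a q == p then c l else 0) else 0)) => [|q _]; last first.
  by rewrite [i l == q]eq_sym; case: (q == i l); case: (a q == p).
rewrite -big_mkcond big_nat1_eq.
by have := i_pos l lK; have := a_ge (i l); case: ifP; case: eqP; lia.
Qed.

Lemma is_monomial_push a m : incr_seq a -> is_monomial (push a m) -> is_monomial m.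
Proof.
move=> aS [m0 [N supp]]; split; first by move: m0; rewrite /push.
exists N => q Nq; have q_pos : 1 <= q by lia.
rewrite -(push_at m aS q_pos); apply: supp.
by have := incr_seq_gap aS (leqnn 1) q_pos; have := proj1 aS; lia.
Qed.

Lemma A_op_quasi_symmetric f a : (forall e, ~ is_monomial e -> f e = 0%R) ->
  quasi_symmetric f -> incr_seq a -> A_op a f = f.
Proof.
move=> f_supp f_qs aS; apply: functional_extensionality => m; rewrite /A_op.
case: (classic (is_monomial m)) => [[m0 [N m_supp]] | m_nonmono]; last first.
  by rewrite !f_supp // => /(is_monomial_push aS).
have m_eq := mono_of_id m0 m_supp.
transitivity (f (mono_of N id m)); last by rewrite m_eq.
rewrite -{1}m_eq push_mono_of //.
by apply: f_qs; [apply: incr_seq_incr_upto | split].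
Qed.

Section A_op_invariant.

Variables (f : series) (n : nat).
Hypothesis f_deg : forall e, f e <> 0%R -> mdeg_le e n.
Hypothesis f_inv : forall k, 1 <= k -> k <= n -> A_op (a_k k) f = f.

Lemma coef_mono_of_a_k K g i c : 1 <= g <= n -> incr_upto K i ->
  f (mono_of K (a_k g \o i) c) = f (mono_of K i c).
Proof.
move=> /andP[g_pos gn] iK; have aS := incr_seq_a_k g_pos.
by rewrite -push_mono_of // -[f (push _ _)]/(A_op (a_k g) f _) f_inv.
Qed.

Lemma coef_mono_of_deg_gt K i c :
  incr_upto K i -> n < \sum_(1 <= l < K.+1) c l ->
  f (mono_of K i c) = 0%R.
Proof.
move=> iK deg_gt; apply/eqP; apply: contraTT deg_gt => /eqP f_nz.
by rewrite -leqNgt -(sum_mono_of c iK (ltnSn (i K))); apply: f_deg.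
Qed.

Lemma coef_mono_of_compress K i c :
  incr_upto K i -> (forall l, 1 <= l <= K -> 0 < c l) ->
  f (mono_of K i c) = f (mono_of K id c).
Proof.
move=> iK c_pos.
case: (leqP (\sum_(1 <= l < K.+1) c l) n) => [deg_le | deg_gt]; last first.
  by rewrite !coef_mono_of_deg_gt.
have Kn : K <= n.
  have : \sum_(1 <= l < K.+1) 1 <= \sum_(1 <= l < K.+1) c l.
    by rewrite big_nat_cond [leqRHS]big_nat_cond; apply: leq_sum => l /andP[/c_pos].
  by rewrite sum_nat_const_nat; lia.
have [t iKt] : exists t, i K = t by exists (i K).
elim/ltn_ind: t i iK iKt => t IHt i iK iKt.
case: (boolP (has (fun l => l < i l) (iota 1 K))) => [/hasP[l0] | /hasPn fixed].
  rewrite mem_iota => l0_range l0_moved; have l0K : 1 <= l0 <= K by lia.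
  have [g [i' [gK i'K i'K_lt i_eq]]] := incr_upto_factor_a_k iK l0K l0_moved.
  rewrite (@eq_mono_of K i (a_k g \o i')) // coef_mono_of_a_k //; last by lia.
  by apply: (IHt (i' K)) => //; lia.
apply: congr1; apply: eq_mono_of; apply: incr_upto_fixed => // l lK.
by have := fixed l; rewrite mem_iota; lia.
Qed.

Lemma a_k_invariant_quasi_symmetric : quasi_symmetric f.
Proof.
move=> K c i j iK jK.
have [K' [a [c' [aK' aK'K c'_pos mono_eq]]]] := drop_zero_exponents K c.
have iaK := incr_upto_comp iK aK' aK'K; have jaK := incr_upto_comp jK aK' aK'K.
by rewrite !mono_eq !coef_mono_of_compress.
Qed.

End A_op_invariant.

Theorem lemma8p3 (f : series) (n : nat) :
  in_K f -> has_degree f n ->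
  (quasi_symmetric f <->
   (forall k : nat, (1 <= k)%N -> (k <= n)%N -> A_op (a_k k) f = f)).
Proof.
move=> [f_supp _] [f_deg _]; split=> [f_qs k k_pos _ | f_inv].
  exact: A_op_quasi_symmetric (incr_seq_a_k k_pos).
exact: a_k_invariant_quasi_symmetric f_deg f_inv.
Qed.
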